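(* Let $\mathcal{K}$ be a finite-dimensional complex Hilbert space and $\mathcal{E}$ a completely positive trace-preserving map on the operators of $\mathcal{K}$ admitting a Kraus (operator-sum) representation $\mathcal{E}(\rho)=\sum_{i}V_i\rho V_i^\dagger$ in which one term is $V_1=\sqrt{\alpha}\,I$ with $\alpha>0$. Then, viewing $\mathcal{E}$ as a linear map on the space of operators on $\mathcal{K}$, the only eigenvalue of $\mathcal{E}$ of modulus one can be $1$. *)

From HB Require Import structures.
From mathcomp Require Import all_boot all_order all_algebra.
Set Implicit Arguments. Unset Strict Implicit. Unset Printing Implicit Defensive.
Import Order.TTheory GRing.Theory Num.Theory.
Local Open Scope ring_scope.

(* Operators on K = C^n are n x n matrices over C (a numeric closed field,
   e.g. the complex numbers). *)

Definition adjmx (C : numClosedFieldType) (n : nat) (A : 'M[C]_n) : 'M[C]_n :=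
  map_mx Num.conj A^T.

Definition kraus_map (C : numClosedFieldType) (n m : nat)
  (V : 'I_m -> 'M[C]_n) (rho : 'M[C]_n) : 'M[C]_n :=
  \sum_(i < m) (V i *m rho *m adjmx (V i)).

Definition kraus_trace_preserving (C : numClosedFieldType) (n m : nat)
  (V : 'I_m -> 'M[C]_n) : Prop :=
  \sum_(i < m) (adjmx (V i) *m V i) = 1%:M.

Definition is_eigenvalue (C : numClosedFieldType) (n : nat)
  (E : 'M[C]_n -> 'M[C]_n) (lambda : C) : Prop :=
  exists2 X : 'M[C]_n, X != 0 & E X = lambda *: X.

From HB Require Import structures.
From mathcomp Require Import all_boot all_order all_algebra ring.
Set Implicit Arguments. Unset Strict Implicit. Unset Printing Implicit Defensive.
Import Order.TTheory GRing.Theory Num.Theory.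
Local Open Scope ring_scope.
Local Open Scope sesquilinear_scope.

(* Under the trace pairing, the adjoint of E is the Heisenberg-picture map
   Phi(Y) = sum_i V_i^dagger Y V_i, so lambda is also an eigenvalue of Phi.
   Splitting off the term V_1 = sqrt(alpha) I gives Phi = alpha id + Psi with
   Psi completely positive and Psi(I) = (1 - alpha) I; by Cauchy-Schwarz such
   a Psi is bounded by 1 - alpha in operator norm, so |lambda - alpha| <= 1 - alpha.
   The disc of radius 1 - alpha around alpha meets the unit circle only at 1. *)

Local Notation "''[' u , v ]" := (dotmx u v) : ring_scope.
Local Notation "''[' u ]" := (dotmx u u) : ring_scope.

Section DotProduct.
Variable C : numClosedFieldType.

Lemma dotmx_sum n (u v : 'rV[C]_n) : '[u, v] = \sum_j u 0 j * (v 0 j)^*.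
Proof. by rewrite dotmxE mxE; apply: eq_bigr => j _; rewrite !mxE. Qed.

Lemma dotmx_mxvec m n (A B : 'M[C]_(m, n)) :
  '[mxvec A, mxvec B] = \sum_i '[row i A, row i B].
Proof.
rewrite dotmx_sum (reindex _ (curry_mxvec_bij m n)) /=.
under [RHS]eq_bigr do rewrite dotmx_sum.
by rewrite pair_bigA; apply: eq_bigr => -[i j] _; rewrite !mxvecE !mxE.
Qed.

Lemma CauchySchwarz_sum m n (x y : 'I_m -> 'rV[C]_n) :
  `|\sum_i '[x i, y i]| ^+ 2 <= (\sum_i '[x i]) * (\sum_i '[y i]).
Proof.
set X := mxvec (\matrix_i x i); set Y := mxvec (\matrix_i y i).
have : `|'[X, Y]| ^+ 2 <= '[X] * '[Y] := (CauchySchwarz (@dotmx C _) X Y).1.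
by rewrite !dotmx_mxvec; congr (`|_| ^+ 2 <= _ * _); apply: eq_bigr => i _; rewrite !rowK.
Qed.

Lemma dnorm_sum n (u : 'rV[C]_n) : '[u] = \sum_j `|u 0 j| ^+ 2.
Proof. by rewrite dotmx_sum; apply: eq_bigr => j _; rewrite normCK. Qed.

Lemma dnorm_mulmx_trmxC_unitary n (U : 'M[C]_n) (u : 'rV[C]_n) :
  U \is unitarymx -> '[u *m U^t*] = '[u].
Proof.
by move=> Uu; rewrite !dotmxE trmx_mul map_mxM trmxCK mulmxA mulmxKtV.
Qed.

Lemma dotmx_diag n (d z : 'rV[C]_n) :
  (z *m diag_mx d *m z^t*) 0 0 = \sum_j d 0 j * `|z 0 j| ^+ 2.
Proof.
rewrite mxE; apply: eq_bigr => j _.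
by rewrite mul_mx_diag !mxE normCK mulrAC mulrC.
Qed.

Lemma exists_max_dnorm_mulmx n (Y : 'M[C]_n) : (0 < n)%N ->
  exists2 v : 'rV[C]_n, '[v] = 1 & forall w, '[w *m Y] <= '[v *m Y] * '[w].
Proof.
move=> n_gt0; set P := Y *m Y^t*.
have P_normal : P \is normalmx.
  by apply/normalmxP; rewrite /P trmx_mul map_mxM trmxCK.
have /orthomx_spectralP := P_normal.
set U := spectralmx P; set d := spectral_diag P => PE.
have U_unitary : U \is unitarymx := spectral_unitarymx P.
rewrite invmx_unitary // in PE.
have dnormY w : '[w *m Y] = \sum_j d 0 j * `|(w *m U^t*) 0 j| ^+ 2.
  rewrite dotmxE trmx_mul map_mxM mulmxA -[w *m Y *m _]mulmxA -/P PE.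
  by rewrite -dotmx_diag trmx_mul map_mxM trmxCK !mulmxA.
have dE k : d 0 k = '[row k U *m Y].
  rewrite dnormY -row_mul (unitarymxP U_unitary) row1 (bigD1 k) //= big1 => [|j jk].
    by rewrite !mxE /= eqxx normr1 expr1n mulr1 addr0.
  by rewrite !mxE /= (negbTE jk) normr0 expr0n mulr0.
have d_real k : d 0 k \is Num.real by rewrite dE ger0_real ?dnorm_ge0.
have [k0 _ dmax] :=
  @real_arg_maxP _ _ (Ordinal n_gt0) xpredT (fun k => d 0 k) isT (in1W d_real).
exists (row k0 U); first by move/row_unitarymxP : U_unitary => ->; rewrite eqxx.
move=> w; rewrite -dE dnormY -(dnorm_mulmx_trmxC_unitary w U_unitary) dnorm_sum mulr_sumr.
by apply: ler_sum => j _; apply: ler_wpM2r (dmax j isT); rewrite exprn_ge0.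
Qed.

End DotProduct.

Section KrausMaps.
Variables (C : numClosedFieldType) (n : nat).
Implicit Types (X Y : 'M[C]_n) (u x : 'rV[C]_n).

Lemma kraus_map_is_linear m (V : 'I_m -> 'M[C]_n) : linear (kraus_map V).
Proof.
move=> a X Y; rewrite /kraus_map scaler_sumr -big_split; apply: eq_bigr => i _ /=.
by rewrite mulmxDr mulmxDl -scalemxAr -scalemxAl.
Qed.

HB.instance Definition _ m (V : 'I_m -> 'M[C]_n) :=
  GRing.isLinear.Build C 'M[C]_n 'M[C]_n _ (kraus_map V) (kraus_map_is_linear V).

Lemma mxtrace_mul_kraus_map m (V : 'I_m -> 'M[C]_n) X Y :
  \tr (Y *m kraus_map V X) = \tr (kraus_map (fun i => adjmx (V i)) Y *m X).
Proof.
rewrite /kraus_map mulmx_sumr mulmx_suml !raddf_sum; apply: eq_bigr => i _ /=.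
by rewrite /adjmx trmxCK !mulmxA mxtrace_mulC !mulmxA.
Qed.

Lemma mxtrace_mul_trmxC X : \tr (X *m X^t*) = \sum_i '[row i X].
Proof.
by apply: eq_bigr => i _; rewrite dotmxE !mxE; apply: eq_bigr => j _; rewrite !mxE.
Qed.

Lemma mxtrace_mul_trmxC_eq0 X : (\tr (X *m X^t*) == 0) = (X == 0).
Proof.
rewrite mxtrace_mul_trmxC psumr_eq0 => [|i _]; last exact: dnorm_ge0.
apply/allP/eqP => [X0|-> i _]; last by rewrite row0 dnorm_eq0 eqxx.
apply/row_matrixP => i; apply/eqP; rewrite row0.
by have := X0 i (mem_index_enum i); rewrite dnorm_eq0.
Qed.

Lemma is_eigenvalue_trace_dual (E : 'M[C]_n -> 'M[C]_n)
    (F : {linear 'M[C]_n -> 'M[C]_n}) lambda :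
  (forall X Y, \tr (Y *m E X) = \tr (F Y *m X)) ->
  is_eigenvalue E lambda -> is_eigenvalue F lambda.
Proof.
move=> dualEF [X X0 EX].
(* If F - lambda were onto, X^t* = (F - lambda) Y would give
   \tr (X^t* *m X) = \tr (Y *m (E - lambda) X) = 0. *)
pose M := lin_mx F - lambda%:M.
have mxvecM Y : mxvec (F Y - lambda *: Y) = mxvec Y *m M.
  by rewrite mulmxBr mul_vec_lin mul_mx_scalar linearB linearZ.
have [/det0P [w w0 wM] | detM] := boolP (\det M == 0).
  exists (vec_mx w); first by rewrite vec_mx_eq0.
  by apply/eqP; rewrite -subr_eq0 -mxvec_eq0 mxvecM vec_mxK wM.
pose Y := vec_mx (mxvec (X^t*) *m invmx M).
have FY : F Y - lambda *: Y = X^t*.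
  by apply: (can_inj mxvecK); rewrite mxvecM vec_mxK mulmxKV // unitmxE unitfE.
case/negP: X0; rewrite -mxtrace_mul_trmxC_eq0 mxtrace_mulC -FY mulmxBl linearB /=.
by rewrite -dualEF EX -scalemxAl -scalemxAr !linearZ /= subrr.
Qed.

Lemma dotmx_kraus_map m (W : 'I_m -> 'M[C]_n) Y u x :
  '[u *m kraus_map W Y, x] = \sum_i '[u *m W i *m Y, x *m W i].
Proof.
rewrite dotmxE /kraus_map mulmx_sumr mulmx_suml summxE; apply: eq_bigr => i _.
by rewrite dotmxE trmx_mul map_mxM !mulmxA.
Qed.

Lemma kraus_map_eigenvalue_norm_le m (W : 'I_m -> 'M[C]_n) (c mu : C) :
  kraus_map W 1%:M = c%:M -> is_eigenvalue (kraus_map W) mu -> `|mu| <= c.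
Proof.
move=> W1 [Y Y0 WY].
have n_gt0 : (0 < n)%N.
  rewrite lt0n; apply: contraNneq Y0 => n0.
  by apply/eqP/matrixP => -[i Hi]; exfalso; rewrite n0 in Hi.
have [v v1 vmax] := exists_max_dnorm_mulmx Y n_gt0; set s := '[v *m Y] in vmax.
have sum_dnorm u : \sum_i '[u *m W i] = c * '[u].
  have := dotmx_kraus_map W 1%:M u u; rewrite W1 mul_mx_scalar linearZl_LR /=.
  by under eq_bigr do rewrite mulmx1.
have c_ge0 : 0 <= c.
  by rewrite -[c]mulr1 -v1 -sum_dnorm sumr_ge0 // => i _; apply: dnorm_ge0.
have s_gt0 : 0 < s.
  rewrite lt_def dnorm_ge0 andbT; apply: contraNneq Y0 => s0.
  apply/eqP/row_matrixP => i; rewrite row0 rowE.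
  have := vmax (delta_mx 0 i); rewrite s0 mul0r => le0.
  have : '[delta_mx 0 i *m Y] == 0 by rewrite eq_le le0 dnorm_ge0.
  by rewrite dnorm_eq0 => /eqP.
have [->|mu0] := eqVneq mu 0; first by rewrite normr0.
set u := v *m (mu *: Y).
have dnorm_u : '[u] = `|mu| ^+ 2 * s by rewrite /u -scalemxAr dnormZ.
have u_gt0 : 0 < '[u] by rewrite dnorm_u mulr_gt0 // exprn_gt0 // normr_gt0.
have := CauchySchwarz_sum (fun i => v *m W i *m Y) (fun i => u *m W i).
rewrite -dotmx_kraus_map WY -/u sum_dnorm ger0_norm ?dnorm_ge0 // => cs.
have sum_vWY : \sum_i '[v *m W i *m Y] <= s * c.
  rewrite -[s * c]mulr1 -v1 -mulrA -sum_dnorm mulr_sumr.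
  by apply: ler_sum => i _; apply: vmax.
have : '[u] <= s * c ^+ 2.
  rewrite -(ler_pM2r u_gt0) -expr2 (le_trans cs) // expr2.
  by rewrite mulrA [s * _]mulrA; apply/ler_wpM2r/ler_wpM2r => //; apply: dnorm_ge0.
by rewrite dnorm_u mulrC ler_pM2l // ler_sqr ?nnegrE.
Qed.

End KrausMaps.

Lemma eq1_of_norm1_ler_dist (C : numClosedFieldType) (lambda a : C) :
  0 < a -> `|lambda| = 1 -> `|lambda - a| <= 1 - a -> lambda = 1.
Proof.
move=> a_gt0 lambda1 dist_le.
set q := lambda + lambda^*.
have normB b : b^* = b -> `|lambda - b| ^+ 2 = 1 - b * q + b ^+ 2.
  move=> b_conj; rewrite normCK rmorphB /= b_conj.
  transitivity (lambda * lambda^* - b * q + b ^+ 2); first by rewrite /q; ring.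
  by rewrite -normCK lambda1 expr1n.
have : `|lambda - a| ^+ 2 <= (1 - a) ^+ 2.
  by rewrite ler_sqr ?nnegrE // (le_trans _ dist_le).
have -> : (1 - a) ^+ 2 = 1 - a * (1 + 1) + a ^+ 2 by ring.
rewrite normB ?(geC0_conj (ltW a_gt0)) // lerD2r lerD2l lerN2 ler_pM2l // => q_ge2.
have : `|lambda - 1| ^+ 2 == 0.
  by rewrite eq_le exprn_ge0 ?andbT // normB ?conjC1 // mul1r expr1n addrAC subr_le0.
by rewrite sqrf_eq0 normr_eq0 subr_eq0 => /eqP.
Qed.

Theorem lemma2 (C : numClosedFieldType) (n m : nat)
  (V : 'I_m.+1 -> 'M[C]_n) (alpha : C) :
  kraus_trace_preserving V ->
  0 < alpha ->
  V ord0 = (sqrtC alpha)%:M ->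
  forall lambda : C, `|lambda| = 1 ->
    is_eigenvalue (kraus_map V) lambda -> lambda = 1.
Proof.
move=> TP alpha_gt0 V0 lambda lambda1 eigE.
pose W i := adjmx (V (lift ord0 i)).
have dual_split Y : kraus_map (fun i => adjmx (V i)) Y = alpha *: Y + kraus_map W Y.
  rewrite /kraus_map big_ord_recl V0 /adjmx trmxCK tr_scalar_mx map_scalar_mx /=.
  have sqrt_conj : (sqrtC alpha)^* = sqrtC alpha by rewrite geC0_conj // sqrtC_ge0 ltW.
  by rewrite mul_scalar_mx -scalemxAl mul_mx_scalar scalerA sqrt_conj -expr2 sqrtCK.
have dual1 : kraus_map (fun i => adjmx (V i)) 1%:M = 1%:M.
  by rewrite -[RHS]TP; apply: eq_bigr => i _; rewrite mulmx1 /adjmx trmxCK.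
have [Y Y0 EY] := is_eigenvalue_trace_dual (mxtrace_mul_kraus_map V) eigE.
apply: (eq1_of_norm1_ler_dist alpha_gt0 lambda1).
apply: (@kraus_map_eigenvalue_norm_le _ _ _ W).
- apply: (addrI (alpha *: 1%:M)); rewrite -dual_split dual1 scalemx1 -raddfD /=.
  by rewrite addrC subrK.
- exists Y => //; apply: (addrI (alpha *: Y)).
  by rewrite -dual_split EY scalerBl addrC subrK.
Qed.
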